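(* Let $G_3$ be the group described in the context and let $\sigma$ be the automorphism of $G_3$ (of order 2) determined by $a_i^\sigma=b_i$, $b_i^\sigma=a_i$, $u_{ij}^\sigma=v_{ij}$, $v_{ij}^\sigma=u_{ij}$, $p_{ij}^\sigma=p_{ij}$, $z_{123}^\sigma=t_{123}$, $t_{123}^\sigma=z_{123}$. Let $\tau:G_3\to G_3$ be the map determined by $a_i^\tau=a_i$, $b_i^\tau=a_i^{-1}b_i^{-1}$, $u_{ij}^\tau=u_{ij}$, $v_{ij}^\tau=u_{ij}v_{ij}$, $p_{ij}^\tau=u_{ij}p_{ij}$, $z_{123}^\tau=z_{123}$, $t_{123}^\tau=z_{123}t_{123}$. Then $\tau$ is an automorphism of $G_3$ of order $2$, and $\rho=\sigma\circ\tau$ (apply $\tau$ first, then $\sigma$; so $a_i^\rho=b_i$, $b_i^\rho=a_i^{-1}b_i^{-1}$, $u_{ij}^\rho=v_{ij}$, $v_{ij}^\rho=u_{ij}v_{ij}$, $p_{ij}^\rho=v_{ij}p_{ij}$, $z_{123}^\rho=t_{123}$, $t_{123}^\rho=z_{123}t_{123}$) is an automorphism of $G_3$ of order $3$.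
   Context: For a group, $[x,y]=x^{-1}y^{-1}xy$. $G_3$ is the nilpotent group of class $3$ generated by $a_1,a_2,a_3,b_1,b_2,b_3$ with the following defining relations, where $u_{ij}=[a_i,a_j]$, $v_{ij}=[b_i,b_j]$, $p_{ij}=[a_i,b_j]$, indices in $\{1,2,3\}$: (1) $[a_i,b_i]=1$ and $a_i^2,b_i^2$ are central; (2) for $i<j$: $u_{ij}=u_{ji}$, $v_{ij}=v_{ji}$, $u_{ij}^2=v_{ij}^2=1$; (3) $u_{ij},v_{ij}$ central; (4) $p_{ij}=p_{ji}$, $p_{ij}^2=1$ for $i<j$; (5) for $\{i,j,k\}=\{1,2,3\}$, $z_{ijk}:=[p_{ij},a_k]$ with $z_{ijk}=z_{jik}=z_{kij}$; (6) $t_{ijk}:=[p_{ij},b_k]$ with $t_{ijk}=t_{jik}=t_{kij}$; (7) $z_{ijk}^2=t_{ijk}^2=1$; (8) $z_{ijk},t_{ijk}$ central. Every element of $G_3$ has a unique normal form $a_1^{\alpha_1}a_2^{\alpha_2}a_3^{\alpha_3}b_1^{\alpha_4}b_2^{\alpha_5}b_3^{\alpha_6}u_{12}^{\alpha_7}u_{13}^{\alpha_8}u_{23}^{\alpha_9}v_{12}^{\alpha_{10}}v_{13}^{\alpha_{11}}v_{23}^{\alpha_{12}}p_{12}^{\alpha_{13}}p_{13}^{\alpha_{14}}p_{23}^{\alpha_{15}}z_{123}^{\alpha_{16}}t_{123}^{\alpha_{17}}$ ($\alpha_1,\dots,\alpha_6\in\mathbb{Z}$, others in $\{0,1\}$);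 maps given on these elements are extended to $G_3$ multiplicatively through this normal form. *)

(* G_3 is an infinite group: we work with an abstract group
   (carrier + operations + axioms) equipped with elements a_i, b_i satisfying the
   defining relations of G_3 and such that every element has a unique normal form.
   Such a group is exactly (isomorphic to) G_3. *)
From Stdlib Require Import ZArith Arith.
Set Implicit Arguments.

Record group := Group {
  carrier :> Type;
  gmul : carrier -> carrier -> carrier;
  gone : carrier;
  ginv : carrier -> carrier;
  gmulA : forall x y z, gmul x (gmul y z) = gmul (gmul x y) z;
  gmul1l : forall x, gmul gone x = x;
  gmulVl : forall x, gmul (ginv x) x = gone }.

Arguments gmul {g} _ _.
Arguments gone {g}.
Arguments ginv {g} _.

Section G3.
Variable G : group.

Fixpoint npow (x : G) (n : nat) : G :=
  match n with 0 => gone | S n => gmul x (npow x n) end.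

Definition zpow (x : G) (e : Z) : G :=
  match e with
  | Z0 => gone
  | Zpos q => npow x (Pos.to_nat q)
  | Zneg q => ginv (npow x (Pos.to_nat q))
  end.

Definition bpow (x : G) (b : bool) : G := if b then x else gone.

Definition comm (x y : G) : G := gmul (gmul (gmul (ginv x) (ginv y)) x) y.

Definition central (x : G) : Prop := forall y, gmul x y = gmul y x.

Variables a b : nat -> G.

Definition uu i j := comm (a i) (a j).
Definition vv i j := comm (b i) (b j).
Definition pp i j := comm (a i) (b j).
Definition zz i j k := comm (pp i j) (a k).
Definition tt i j k := comm (pp i j) (b k).

Definition idx (i : nat) : Prop := 1 <= i <= 3.

Definition G3_relations : Prop :=
  (forall i, idx i ->
     comm (a i) (b i) = gone /\ central (npow (a i) 2) /\ central (npow (b i) 2)) /\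
  (forall i j, idx i -> idx j -> i < j ->
     uu i j = uu j i /\ vv i j = vv j i /\
     npow (uu i j) 2 = gone /\ npow (vv i j) 2 = gone /\
     central (uu i j) /\ central (vv i j) /\
     pp i j = pp j i /\ npow (pp i j) 2 = gone) /\
  (forall i j k, idx i -> idx j -> idx k -> i <> j -> j <> k -> i <> k ->
     zz i j k = zz j i k /\ zz i j k = zz k i j /\
     tt i j k = tt j i k /\ tt i j k = tt k i j /\
     npow (zz i j k) 2 = gone /\ npow (tt i j k) 2 = gone /\
     central (zz i j k) /\ central (tt i j k)).

Definition basis (k : nat) : G :=
  match k with
  | 1 => a 1 | 2 => a 2 | 3 => a 3
  | 4 => b 1 | 5 => b 2 | 6 => b 3
  | 7 => uu 1 2 | 8 => uu 1 3 | 9 => uu 2 3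
  | 10 => vv 1 2 | 11 => vv 1 3 | 12 => vv 2 3
  | 13 => pp 1 2 | 14 => pp 1 3 | 15 => pp 2 3
  | 16 => zz 1 2 3 | 17 => tt 1 2 3
  | _ => gone
  end.

Definition tau_img (k : nat) : G :=
  match k with
  | 4 => gmul (ginv (a 1)) (ginv (b 1))
  | 5 => gmul (ginv (a 2)) (ginv (b 2))
  | 6 => gmul (ginv (a 3)) (ginv (b 3))
  | 10 => gmul (uu 1 2) (vv 1 2)
  | 11 => gmul (uu 1 3) (vv 1 3)
  | 12 => gmul (uu 2 3) (vv 2 3)
  | 13 => gmul (uu 1 2) (pp 1 2)
  | 14 => gmul (uu 1 3) (pp 1 3)
  | 15 => gmul (uu 2 3) (pp 2 3)
  | 17 => gmul (zz 1 2 3) (tt 1 2 3)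
  | k => basis k
  end.

Definition sigma_img (k : nat) : G :=
  match k with
  | 1 => b 1 | 2 => b 2 | 3 => b 3
  | 4 => a 1 | 5 => a 2 | 6 => a 3
  | 7 => vv 1 2 | 8 => vv 1 3 | 9 => vv 2 3
  | 10 => uu 1 2 | 11 => uu 1 3 | 12 => uu 2 3
  | 16 => tt 1 2 3 | 17 => zz 1 2 3
  | k => basis k
  end.

End G3.
Arguments npow {G} _ _.
Arguments zpow {G} _ _.
Arguments bpow {G} _ _.
Arguments comm {G} _ _.
Arguments central {G} _.
Arguments basis {G} _ _ _.
Arguments tau_img {G} _ _ _.
Arguments sigma_img {G} _ _ _.
Arguments G3_relations {G} _ _.

Record NF := mkNF {
  e1 : Z; e2 : Z; e3 : Z; e4 : Z; e5 : Z; e6 : Z;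
  f7 : bool; f8 : bool; f9 : bool; f10 : bool; f11 : bool; f12 : bool;
  f13 : bool; f14 : bool; f15 : bool; f16 : bool; f17 : bool }.

Definition nfeval {G : group} (c : nat -> G) (n : NF) : G :=
  let m := @gmul G in
  m (m (m (m (m (m (m (m (m (m (m (m (m (m (m (m
    (zpow (c 1) (e1 n)) (zpow (c 2) (e2 n))) (zpow (c 3) (e3 n)))
    (zpow (c 4) (e4 n))) (zpow (c 5) (e5 n))) (zpow (c 6) (e6 n)))
    (bpow (c 7) (f7 n))) (bpow (c 8) (f8 n))) (bpow (c 9) (f9 n)))
    (bpow (c 10) (f10 n))) (bpow (c 11) (f11 n))) (bpow (c 12) (f12 n)))
    (bpow (c 13) (f13 n))) (bpow (c 14) (f14 n))) (bpow (c 15) (f15 n)))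
    (bpow (c 16) (f16 n))) (bpow (c 17) (f17 n)).

Definition G3_unique_normal_form {G : group} (a b : nat -> G) : Prop :=
  forall g : G, exists! n : NF, nfeval (basis a b) n = g.

Definition is_hom {G : group} (f : G -> G) : Prop :=
  forall x y, f (gmul x y) = gmul (f x) (f y).

Definition is_automorphism {G : group} (f : G -> G) : Prop :=
  is_hom f /\ exists g : G -> G, (forall x, g (f x) = x) /\ (forall x, f (g x) = x).

Definition has_order {G : group} (f : G -> G) (n : nat) : Prop :=
  0 < n /\ (forall x, Nat.iter n f x = x) /\
  (forall m, 0 < m < n -> exists x, Nat.iter m f x <> x).

(* Collecting the product of two normal-form words back into normal form uses
   nothing but the defining relations, and is given by an explicit function
   [nf_mul] on exponent vectors.  Hence, in any family of elements satisfying
   the relations, [nf_mul] computes products of normal forms, and a map sending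
   the normal form of every element in [(a, b)] to the same normal form in
   another such family is a homomorphism.  The families [(a_i, a_i^-1 b_i^-1)]
   and [(b_i, a_i)] satisfy the relations and their derived letters are the
   images prescribed for tau and sigma; all of this consists of word identities,
   decided by computing normal forms.  A homomorphism fixing every [a_i] and
   [b_i] is the identity, so tau^2 = rho^3 = 1 follows from the images of the
   generators, and the orders are exact because tau moves [b_1] while rho and
   rho^2 move [a_1]. *)

From Stdlib Require Import ZArith Lia Btauto Bool List.
Import ListNotations.

Infix "·" := gmul (at level 40, left associativity).

Arguments gmulA {g} x y z.
Arguments gmul1l {g} x.
Arguments gmulVl {g} x.

Section GroupLaws.
Context {G : group}.
Implicit Types w x y z r : G.

Lemma mulgV x : x · ginv x = gone.
Proof.
  rewrite <- (gmul1l (x · ginv x)), <- (gmulVl (ginv x)) at 1.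
  rewrite <- gmulA, (gmulA (ginv x) x), gmulVl, gmul1l.
  apply gmulVl.
Qed.

Lemma mulg1 x : x · gone = x.
Proof. rewrite <- (gmulVl x), gmulA, mulgV, gmul1l. reflexivity. Qed.

Lemma mulKg x y : ginv x · (x · y) = y.
Proof. rewrite gmulA, gmulVl, gmul1l. reflexivity. Qed.

Lemma mulKVg x y : x · (ginv x · y) = y.
Proof. rewrite gmulA, mulgV, gmul1l. reflexivity. Qed.

Lemma mulgK x y : x · y · ginv y = x.
Proof. rewrite <- gmulA, mulgV, mulg1. reflexivity. Qed.

Lemma mulgKV x y : x · ginv y · y = x.
Proof. rewrite <- gmulA, gmulVl, mulg1. reflexivity. Qed.

Lemma mulgI x y z : x · y = x · z -> y = z.
Proof. intro E. rewrite <- (mulKg x y), E, mulKg. reflexivity. Qed.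

Lemma invg_of_mul1 x y : x · y = gone -> ginv x = y.
Proof. intro E. apply (mulgI x). rewrite mulgV, E. reflexivity. Qed.

Lemma invMg x y : ginv (x · y) = ginv y · ginv x.
Proof. apply invg_of_mul1. rewrite gmulA, <- (gmulA x y), mulgV, mulg1, mulgV. reflexivity. Qed.

Lemma invgK x : ginv (ginv x) = x.
Proof. apply invg_of_mul1, gmulVl. Qed.

Lemma invg_invol x : x · x = gone -> ginv x = x.
Proof. apply invg_of_mul1. Qed.

Lemma mulg_suffix w x y r : x · y = r -> w · x · y = w · r.
Proof. intro H. rewrite <- gmulA, H. reflexivity. Qed.

End GroupLaws.

Ltac rewrite_suffix E := rewrite (mulg_suffix _ _ _ _ E), ?gmulA.

Definition commute {G : group} (x y : G) : Prop := x · y = y · x.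

Section Commute.
Context {G : group}.
Implicit Types x y z c : G.

Lemma commute_sym x y : commute x y -> commute y x.
Proof. unfold commute; auto. Qed.

Lemma commute1 x : commute gone x.
Proof. unfold commute. rewrite gmul1l, mulg1. reflexivity. Qed.

Lemma commuteM x y z : commute x z -> commute y z -> commute (x · y) z.
Proof. unfold commute; intros Hx Hy. rewrite <- gmulA, Hy, gmulA, Hx, gmulA. reflexivity. Qed.

Lemma commuteV x y : commute x y -> commute (ginv x) y.
Proof.
  unfold commute; intro H. apply (mulgI x).
  rewrite gmulA, mulgV, gmul1l, gmulA, H, mulgK. reflexivity.
Qed.

Lemma commute_npow x y n : commute x y -> commute (npow x n) y.
Proof. intro H; induction n; simpl; auto using commute1, commuteM. Qed.

Lemma commute_zpow x y e : commute x y -> commute (zpow x e) y.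
Proof. intro H; destruct e; simpl; auto using commute1, commute_npow, commuteV. Qed.

Lemma commute_bpow x y f : commute x y -> commute (bpow x f) y.
Proof. intro H; destruct f; simpl; auto using commute1. Qed.

Lemma commute_zpow2 x y e f : commute x y -> commute (zpow x e) (zpow y f).
Proof. auto using commute_zpow, commute_sym. Qed.

Lemma central1 : central (@gone G).
Proof. exact commute1. Qed.

Lemma centralM c d : central c -> central d -> central (c · d).
Proof. intros Hc Hd y. apply commuteM; [apply Hc | apply Hd]. Qed.

Lemma centralV c : central c -> central (ginv c).
Proof. intros Hc y. apply commuteV, Hc. Qed.

Lemma central_bpow c f : central c -> central (bpow c f).
Proof. intros Hc y. apply commute_bpow, Hc. Qed.

Lemma central_shift c x y : central c -> x · c · y = x · y · c.
Proof. intro Hc. rewrite <- gmulA, (Hc y), gmulA. reflexivity. Qed.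

Lemma commgC x y : x · y = y · x · comm x y.
Proof. unfold comm. rewrite !gmulA, mulgK, mulgV, gmul1l. reflexivity. Qed.

Lemma comm1_commute x y : comm x y = gone -> commute x y.
Proof. intro H. unfold commute. rewrite commgC, H, mulg1. reflexivity. Qed.

Lemma commute_comm1 x y : commute x y -> comm x y = gone.
Proof. unfold commute, comm; intro H. rewrite <- gmulA, H, !gmulA, mulgKV, gmulVl. reflexivity. Qed.

Lemma invg_comm x y : ginv (comm x y) = comm y x.
Proof. apply invg_of_mul1. unfold comm. rewrite !gmulA, !mulgK, mulgKV, gmulVl. reflexivity. Qed.

Lemma comm_refl x : comm x x = gone.
Proof. apply commute_comm1. reflexivity. Qed.

Lemma comm1g x : comm gone x = gone.
Proof. apply commute_comm1, commute1. Qed.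

Lemma central_commute c y : central c -> commute c y.
Proof. intro Hc. apply Hc. Qed.

Lemma central_commute_r c y : central c -> commute y c.
Proof. intro Hc. apply commute_sym, Hc. Qed.

End Commute.

Section Powers.
Context {G : group}.
Implicit Types x y c : G.

Lemma npowSr x n : npow x (S n) = npow x n · x.
Proof.
  induction n as [|n IH].
  - simpl. rewrite gmul1l, mulg1. reflexivity.
  - change (npow x (S (S n))) with (x · npow x (S n)).
    rewrite IH at 1. apply gmulA.
Qed.

Lemma npow2 x : npow x 2 = x · x.
Proof. simpl. rewrite mulg1. reflexivity. Qed.

Lemma zpowS x e : zpow x (Z.succ e) = zpow x e · x.
Proof.
  destruct e as [|p|p]; simpl.
  - rewrite mulg1, gmul1l. reflexivity.
  - rewrite Pos.add_1_r, Pos2Nat.inj_succ, npowSr. reflexivity.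
  - destruct (Pos.eq_dec p 1) as [->|Hp]; simpl.
    + rewrite mulg1, gmulVl. reflexivity.
    + assert (Hsub : Z.pos_sub 1 p = Zneg (Pos.pred p)).
      { rewrite Z.pos_sub_lt by lia. f_equal. lia. }
      assert (Hp' : Pos.to_nat p = S (Pos.to_nat (Pos.pred p))).
      { rewrite <- Pos2Nat.inj_succ, Pos.succ_pred; auto. }
      rewrite Hsub, Hp'. simpl. rewrite invMg, mulgKV. reflexivity.
Qed.

Lemma zpowP x e : zpow x (Z.pred e) = zpow x e · ginv x.
Proof. rewrite <- (Z.succ_pred e) at 2. rewrite zpowS, mulgK. reflexivity. Qed.

Lemma zpowD x e f : zpow x (e + f) = zpow x e · zpow x f.
Proof.
  induction f using Z.peano_ind.
  - rewrite Z.add_0_r. simpl. rewrite mulg1. reflexivity.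
  - rewrite Z.add_succ_r, !zpowS, IHf, gmulA. reflexivity.
  - rewrite Z.add_pred_r, !zpowP, IHf, gmulA. reflexivity.
Qed.

Lemma zpow1 x : zpow x 1 = x.
Proof. apply mulg1. Qed.

Lemma zpowN1 x : zpow x (-1) = ginv x.
Proof. simpl. rewrite mulg1. reflexivity. Qed.

Lemma bpow_zpow x f : bpow x f = zpow x (Z.b2z f).
Proof. destruct f; simpl; [rewrite mulg1|]; reflexivity. Qed.

Lemma bpow1 f : bpow (@gone G) f = gone.
Proof. destruct f; reflexivity. Qed.

Lemma bpow_andb c f g : bpow (bpow c f) g = bpow c (f && g).
Proof. destruct f, g; reflexivity. Qed.

Lemma bpow_xorb c f g : c · c = gone -> bpow c f · bpow c g = bpow c (xorb f g).
Proof. intro H; destruct f, g; simpl; rewrite ?gmul1l, ?mulg1; auto. Qed.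

Lemma bpow_negb c f : c · c = gone -> bpow c f · c = bpow c (negb f).
Proof. intro H; destruct f; simpl; rewrite ?gmul1l; auto. Qed.

End Powers.

Section Swap.
Context {G : group}.
Variables x y c : G.
Hypotheses (Hxy : x · y = y · x · c) (Hcx : commute c x) (Hcy : commute c y)
  (Hc2 : c · c = gone).

Lemma swap_rel_sym : y · x = x · y · c.
Proof. rewrite Hxy, <- gmulA, Hc2, mulg1. reflexivity. Qed.

Lemma swap_rel_inv : ginv x · y = y · ginv x · c.
Proof.
  apply (mulgI x). rewrite mulKVg, !gmulA, Hxy, <- (gmulA (y · x) c).
  rewrite (commute_sym _ _ (commuteV _ _ (commute_sym _ _ Hcx))).
  rewrite gmulA, mulgK, <- gmulA, Hc2, mulg1. reflexivity.
Qed.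

Lemma zpow_swap_l e : zpow x e · y = y · zpow x e · bpow c (Z.odd e).
Proof.
  induction e as [|e IH|e IH] using Z.peano_ind.
  - simpl. rewrite gmul1l, !mulg1. reflexivity.
  - assert (HB : commute (bpow c (Z.odd e)) x) by (apply commute_bpow; auto).
    rewrite zpowS, <- gmulA, Hxy, !gmulA, IH, Z.odd_succ, <- Z.negb_odd, <- bpow_negb by auto.
    rewrite <- (gmulA _ _ x), HB, !gmulA. reflexivity.
  - assert (HB : commute (bpow c (Z.odd e)) (ginv x)).
    { apply commute_bpow, commute_sym, commuteV, commute_sym; auto. }
    rewrite zpowP, <- gmulA, swap_rel_inv, !gmulA, IH, Z.odd_pred, <- Z.negb_odd.
    rewrite <- bpow_negb by auto.
    rewrite <- (gmulA _ _ (ginv x)), HB, !gmulA. reflexivity.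
Qed.

End Swap.

Lemma zpow_swap {G : group} (x y c : G) e f :
  x · y = y · x · c -> commute c x -> commute c y -> c · c = gone ->
  zpow x e · zpow y f = zpow y f · zpow x e · bpow c (Z.odd e && Z.odd f).
Proof.
  intros Hxy Hcx Hcy Hc2.
  set (C := bpow c (Z.odd e)).
  assert (HCX : commute C (zpow x e)).
  { apply commute_bpow, commute_sym, commute_zpow, commute_sym; auto. }
  assert (HCy : commute C y) by (apply commute_bpow; auto).
  assert (HC2 : C · C = gone) by (unfold C; destruct (Z.odd e); simpl; auto using gmul1l).
  assert (HXy : zpow x e · y = y · zpow x e · C) by (apply zpow_swap_l; auto).
  rewrite <- bpow_andb. fold C.
  apply swap_rel_sym.
  - apply zpow_swap_l; auto. apply swap_rel_sym; auto.
  - destruct (Z.odd f); simpl; auto using gmul1l.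
Qed.

Lemma zpow_commg {G : group} (x y : G) e f :
  commute (comm x y) x -> commute (comm x y) y -> comm x y · comm x y = gone ->
  zpow x e · zpow y f = zpow y f · zpow x e · bpow (comm x y) (Z.odd e && Z.odd f).
Proof. intros. apply zpow_swap; auto using commgC. Qed.

Lemma pass_zpow {G : group} (l y : G) e :
  central (comm l y) -> comm l y · comm l y = gone ->
  l · zpow y e = zpow y e · l · bpow (comm l y) (Z.odd e).
Proof.
  intros Hc Hc2. pose proof (zpow_commg l y 1 e (Hc l) (Hc y) Hc2) as E.
  rewrite zpow1 in E. exact E.
Qed.

Section CommutatorCalculus.
Context {G : group}.
Implicit Types x y q c : G.

(* Expanding [x^2 y = y x^2] with [x y = y x p] gives [x p x p = x^2]. *)
Lemma commg_commute_l x y :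
  central (npow x 2) -> comm x y · comm x y = gone -> commute (comm x y) x.
Proof.
  intros Hx2 Hp2. set (p := comm x y) in *.
  assert (Hxy : x · y = y · x · p) by apply commgC.
  rewrite npow2 in Hx2.
  assert (E : y · (x · x) = y · (x · p · x · p)).
  { rewrite <- Hx2, <- gmulA, Hxy, !gmulA, Hxy, <- !gmulA. reflexivity. }
  apply mulgI in E. rewrite <- !gmulA in E. apply mulgI in E.
  unfold commute. rewrite E at 2. rewrite !gmulA, <- (gmulA (p · x) p p), Hp2, mulg1.
  reflexivity.
Qed.

Lemma commg_commute_r x y :
  central (npow y 2) -> comm x y · comm x y = gone -> commute (comm x y) y.
Proof.
  intros Hy2 Hp2.
  assert (Hinv : ginv (comm x y) = comm x y) by (apply invg_invol, Hp2).
  rewrite <- Hinv, invg_comm. apply commg_commute_l; auto.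
  rewrite <- invg_comm, Hinv. exact Hp2.
Qed.

Lemma conj_central_commg q x c : q · x = x · q · c -> central c ->
  q · ginv x = ginv x · q · ginv c.
Proof.
  intros Hqx Hc.
  assert (E : ginv x · q · ginv c · x = q).
  { rewrite (central_shift _ _ _ (centralV _ Hc)), <- (gmulA (ginv x) q x), Hqx.
    rewrite !gmulA, mulgK, gmulVl, gmul1l. reflexivity. }
  rewrite <- E at 1. rewrite mulgK. reflexivity.
Qed.

(* Conjugating by [q] multiplies [x] and [y] by central elements, which
   leaves [comm x y] unchanged. *)
Lemma commute_commg q x y :
  central (comm q x) -> central (comm q y) -> commute q (comm x y).
Proof.
  intros Hx Hy. set (cx := comm q x) in *. set (cy := comm q y) in *.
  assert (Ex : q · x = x · q · cx) by apply commgC.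
  assert (Ey : q · y = y · q · cy) by apply commgC.
  pose proof (conj_central_commg _ _ _ Ex Hx) as Exi.
  pose proof (conj_central_commg _ _ _ Ey Hy) as Eyi.
  pose proof (centralV _ Hx) as Hxi. pose proof (centralV _ Hy) as Hyi.
  unfold commute, comm. rewrite <- (gmul1l q) at 1. rewrite !gmulA.
  rewrite_suffix Exi. repeat rewrite (central_shift _ _ _ Hxi).
  rewrite_suffix Eyi. repeat rewrite (central_shift _ _ _ Hyi).
  rewrite_suffix Ex. repeat rewrite (central_shift _ _ _ Hx).
  rewrite_suffix Ey. rewrite gmul1l.
  rewrite <- !gmulA. do 4 f_equal.
  rewrite <- (mulg1 q) at 2. f_equal.
  rewrite (Hxi (ginv cy · cx)), <- (gmulA (ginv cy) cx), mulgV, mulg1, mulgV. reflexivity.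
Qed.

End CommutatorCalculus.

Fixpoint xorl (fs gs : list bool) : list bool :=
  match fs, gs with
  | f :: fs', g :: gs' => xorb f g :: xorl fs' gs'
  | _, _ => []
  end.

Section ProductsOfInvolutions.
Context {G : group}.
Implicit Types (ls cs : list G) (fs gs : list bool) (y : G).

Fixpoint prod_bpow ls fs : G :=
  match ls, fs with
  | l :: ls', f :: fs' => bpow l f · prod_bpow ls' fs'
  | _, _ => gone
  end.

Definition commuting_involutions ls : Prop :=
  (forall x y, In x ls -> In y ls -> commute x y) /\ (forall x, In x ls -> x · x = gone).

Lemma commute_prod_bpow ls fs y :
  (forall l, In l ls -> commute l y) -> commute (prod_bpow ls fs) y.
Proof.
  revert fs; induction ls as [|l ls IH]; intros [|f fs] H; simpl; try apply commute1.
  apply commuteM; [apply commute_bpow, H | apply IH]; simpl; auto.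
  intros; apply H; simpl; auto.
Qed.

Lemma prod_bpow_xorl ls fs gs : commuting_involutions ls ->
  length fs = length ls -> length gs = length ls ->
  prod_bpow ls fs · prod_bpow ls gs = prod_bpow ls (xorl fs gs).
Proof.
  revert fs gs; induction ls as [|l ls IH]; intros [|f fs] [|g gs] [Hc Hi] Hf Hg;
    simpl in *; try discriminate.
  - apply gmul1l.
  - assert (Hls : commuting_involutions ls) by (split; intros; [apply Hc | apply Hi]; simpl; auto).
    assert (C : commute (prod_bpow ls fs) (bpow l g)).
    { apply commute_prod_bpow. intros l' Hl'. apply commute_sym, commute_bpow, Hc; simpl; auto. }
    rewrite <- IH, <- bpow_xorb by auto.
    rewrite <- !gmulA. f_equal. rewrite !gmulA. f_equal. apply C.
Qed.

Lemma prod_bpow_pass ls cs fs y :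
  Forall2 (fun l c => l · y = y · l · c /\ central c) ls cs ->
  prod_bpow ls fs · y = y · prod_bpow ls fs · prod_bpow cs fs.
Proof.
  intro H. revert fs. induction H as [|l c ls cs [Hl Hc] _ IH]; intros [|f fs]; simpl;
    try (rewrite gmul1l, !mulg1; reflexivity).
  assert (B : bpow l f · y = y · bpow l f · bpow c f).
  { destruct f; simpl; auto. rewrite gmul1l, !mulg1. reflexivity. }
  rewrite <- gmulA, IH, !gmulA, B, <- (gmulA (y · bpow l f) (bpow c f)).
  rewrite (central_bpow _ f Hc), !gmulA. reflexivity.
Qed.

Lemma prod_bpow_pass_zpow ls fs y e :
  (forall l, In l ls -> central (comm l y) /\ comm l y · comm l y = gone) ->
  prod_bpow ls fs · zpow y e
  = zpow y e · prod_bpow ls fs · prod_bpow (map (fun l => bpow (comm l y) (Z.odd e)) ls) fs.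
Proof.
  intro H. apply prod_bpow_pass.
  induction ls as [|l ls IH]; constructor.
  - destruct (H l) as [Hc Hc2]; simpl; auto. split; [apply pass_zpow | apply central_bpow]; auto.
  - apply IH. intros; apply H; simpl; auto.
Qed.

Lemma prod_bpow_false ls m : prod_bpow ls (repeat false m) = gone.
Proof.
  revert m; induction ls as [|l ls IH]; intros [|m]; simpl; auto.
  rewrite IH. apply gmul1l.
Qed.

Lemma bpow_nth_prod ls k x : k < length ls ->
  bpow (nth k ls gone) x = prod_bpow ls (repeat false k ++ x :: repeat false (length ls - S k)).
Proof.
  revert k; induction ls as [|l ls IH]; intros [|k] Hk; simpl in *; try lia.
  - rewrite Nat.sub_0_r, prod_bpow_false, mulg1. reflexivity.
  - rewrite gmul1l. apply IH. lia.
Qed.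

End ProductsOfInvolutions.

Lemma idx_cases i : idx i -> i = 1 \/ i = 2 \/ i = 3.
Proof. unfold idx; lia. Qed.

Lemma idx1 : idx 1. Proof. unfold idx; lia. Qed.
Lemma idx2 : idx 2. Proof. unfold idx; lia. Qed.
Lemma idx3 : idx 3. Proof. unfold idx; lia. Qed.

Section G3Consequences.
Context {G : group} (a b : nat -> G).
Hypothesis Hrel : G3_relations a b.

Local Notation U := (uu G a).
Local Notation V := (vv G b).
Local Notation P := (pp G a b).
Local Notation z123 := (zz G a b 1 2 3).
Local Notation t123 := (tt G a b 1 2 3).

Lemma comm_ab i : idx i -> comm (a i) (b i) = gone.
Proof. intro Hi. apply Hrel, Hi. Qed.

Lemma commute_ab i : idx i -> commute (a i) (b i).
Proof. intro Hi. apply comm1_commute, comm_ab, Hi. Qed.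

Lemma central_sq_a i : idx i -> central (npow (a i) 2).
Proof. intro Hi. apply Hrel, Hi. Qed.

Lemma central_sq_b i : idx i -> central (npow (b i) 2).
Proof. intro Hi. apply Hrel, Hi. Qed.

Lemma pair_relations_lt i j : idx i -> idx j -> i < j ->
  U i j = U j i /\ V i j = V j i /\ P i j = P j i /\
  central (U i j) /\ central (V i j) /\
  U i j · U i j = gone /\ V i j · V i j = gone /\ P i j · P i j = gone.
Proof.
  intros Hi Hj Hij. destruct (proj1 (proj2 Hrel) i j Hi Hj Hij) as (?&?&?&?&?&?&?&?).
  rewrite <- !npow2. tauto.
Qed.

Lemma pair_relations i j : idx i -> idx j -> i <> j ->
  U i j = U j i /\ V i j = V j i /\ P i j = P j i /\
  central (U i j) /\ central (V i j) /\
  U i j · U i j = gone /\ V i j · V i j = gone /\ P i j · P i j = gone.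
Proof.
  intros Hi Hj Hij. destruct (Nat.lt_total i j) as [Hlt|[Heq|Hgt]];
    [apply pair_relations_lt; auto | contradiction |].
  destruct (pair_relations_lt j i Hj Hi Hgt) as (Eu&Ev&Ep&?&?&?&?&?).
  rewrite Eu, Ev, Ep in *. tauto.
Qed.

Lemma uu_sym i j : idx i -> idx j -> U i j = U j i.
Proof.
  intros Hi Hj. destruct (Nat.eq_dec i j) as [<-|]; [reflexivity | apply pair_relations; auto].
Qed.

Lemma vv_sym i j : idx i -> idx j -> V i j = V j i.
Proof.
  intros Hi Hj. destruct (Nat.eq_dec i j) as [<-|]; [reflexivity | apply pair_relations; auto].
Qed.

Lemma pp_sym i j : idx i -> idx j -> P i j = P j i.
Proof.
  intros Hi Hj. destruct (Nat.eq_dec i j) as [<-|]; [reflexivity | apply pair_relations; auto].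
Qed.

Lemma uu_central i j : idx i -> idx j -> central (U i j).
Proof.
  intros Hi Hj. destruct (Nat.eq_dec i j) as [<-|]; [| apply pair_relations; auto].
  unfold uu. rewrite comm_refl. apply central1.
Qed.

Lemma vv_central i j : idx i -> idx j -> central (V i j).
Proof.
  intros Hi Hj. destruct (Nat.eq_dec i j) as [<-|]; [| apply pair_relations; auto].
  unfold vv. rewrite comm_refl. apply central1.
Qed.

Lemma uu_invol i j : idx i -> idx j -> U i j · U i j = gone.
Proof.
  intros Hi Hj. destruct (Nat.eq_dec i j) as [<-|]; [| apply pair_relations; auto].
  unfold uu. rewrite comm_refl. apply gmul1l.
Qed.

Lemma vv_invol i j : idx i -> idx j -> V i j · V i j = gone.
Proof.
  intros Hi Hj. destruct (Nat.eq_dec i j) as [<-|]; [| apply pair_relations; auto].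
  unfold vv. rewrite comm_refl. apply gmul1l.
Qed.

Lemma pp_invol i j : idx i -> idx j -> P i j · P i j = gone.
Proof.
  intros Hi Hj. destruct (Nat.eq_dec i j) as [<-|]; [| apply pair_relations; auto].
  unfold pp. rewrite comm_ab by exact Hi. apply gmul1l.
Qed.

Lemma triple_perm_eq i j k : idx i -> idx j -> idx k -> i <> j -> j <> k -> i <> k ->
  zz G a b i j k = z123 /\ tt G a b i j k = t123.
Proof.
  intros Hi Hj Hk Hij Hjk Hik.
  pose proof (proj2 (proj2 Hrel)) as R.
  destruct (R 1 2 3) as (?&?&?&?&_); try (unfold idx; lia).
  destruct (R 2 1 3) as (?&?&?&?&_); try (unfold idx; lia).
  destruct (R 3 1 2) as (?&?&?&?&_); try (unfold idx; lia).
  destruct (idx_cases i Hi) as [ -> | [ -> | -> ] ];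
    destruct (idx_cases j Hj) as [ -> | [ -> | -> ] ];
    destruct (idx_cases k Hk) as [ -> | [ -> | -> ] ]; try congruence; split; congruence.
Qed.

Lemma zz_central : central z123.
Proof. apply (proj2 (proj2 Hrel) 1 2 3); unfold idx; lia. Qed.

Lemma tt_central : central t123.
Proof. apply (proj2 (proj2 Hrel) 1 2 3); unfold idx; lia. Qed.

Lemma zz_invol : z123 · z123 = gone.
Proof. rewrite <- npow2. apply (proj2 (proj2 Hrel) 1 2 3); unfold idx; lia. Qed.

Lemma tt_invol : t123 · t123 = gone.
Proof. rewrite <- npow2. apply (proj2 (proj2 Hrel) 1 2 3); unfold idx; lia. Qed.

Lemma pp_commute_a_l i j : idx i -> idx j -> commute (P i j) (a i).
Proof. intros Hi Hj. apply commg_commute_l; [apply central_sq_a | apply pp_invol]; auto. Qed.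

Lemma pp_commute_b_r i j : idx i -> idx j -> commute (P i j) (b j).
Proof. intros Hi Hj. apply commg_commute_r; [apply central_sq_b | apply pp_invol]; auto. Qed.

Lemma pp_commute_a_r i j : idx i -> idx j -> commute (P i j) (a j).
Proof. intros Hi Hj. rewrite pp_sym by auto. apply pp_commute_a_l; auto. Qed.

Lemma pp_commute_b_l i j : idx i -> idx j -> commute (P i j) (b i).
Proof. intros Hi Hj. rewrite pp_sym by auto. apply pp_commute_b_r; auto. Qed.

Lemma comm_pp_a i j k : idx i -> idx j -> idx k -> i <> j -> j <> k -> i <> k ->
  comm (P i j) (a k) = z123.
Proof. intros. apply triple_perm_eq; auto. Qed.

Lemma comm_pp_b i j k : idx i -> idx j -> idx k -> i <> j -> j <> k -> i <> k ->
  comm (P i j) (b k) = t123.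
Proof. intros. apply triple_perm_eq; auto. Qed.

Lemma comm_pp_a_cases i j k : idx i -> idx j -> idx k ->
  comm (P i j) (a k) = gone \/ comm (P i j) (a k) = z123.
Proof.
  intros Hi Hj Hk.
  destruct (Nat.eq_dec k i) as [->|Hki].
  { left. apply commute_comm1, pp_commute_a_l; auto. }
  destruct (Nat.eq_dec k j) as [->|Hkj].
  { left. apply commute_comm1, pp_commute_a_r; auto. }
  destruct (Nat.eq_dec i j) as [<-|Hij].
  { left. unfold pp. rewrite comm_ab by auto. apply comm1g. }
  right. apply comm_pp_a; auto.
Qed.

Lemma comm_pp_b_cases i j k : idx i -> idx j -> idx k ->
  comm (P i j) (b k) = gone \/ comm (P i j) (b k) = t123.
Proof.
  intros Hi Hj Hk.
  destruct (Nat.eq_dec k i) as [->|Hki].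
  { left. apply commute_comm1, pp_commute_b_l; auto. }
  destruct (Nat.eq_dec k j) as [->|Hkj].
  { left. apply commute_comm1, pp_commute_b_r; auto. }
  destruct (Nat.eq_dec i j) as [<-|Hij].
  { left. unfold pp. rewrite comm_ab by auto. apply comm1g. }
  right. apply comm_pp_b; auto.
Qed.

Lemma pp_commute_pp i j k l : idx i -> idx j -> idx k -> idx l -> commute (P i j) (P k l).
Proof.
  intros Hi Hj Hk Hl. apply commute_commg.
  - destruct (comm_pp_a_cases i j k) as [-> | ->]; auto using central1, zz_central.
  - destruct (comm_pp_b_cases i j l) as [-> | ->]; auto using central1, tt_central.
Qed.

End G3Consequences.

Create HintDb g3.
#[export] Hint Extern 1 (idx _) => (unfold idx; lia) : g3.
#[export] Hint Extern 1 (_ <> _) => lia : g3.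
#[export] Hint Resolve gmul1l central1 central_bpow uu_central vv_central zz_central tt_central
  uu_invol vv_invol pp_invol zz_invol tt_invol pp_commute_pp
  pp_commute_a_l pp_commute_a_r pp_commute_b_l pp_commute_b_r : g3.
#[export] Hint Resolve central_commute central_commute_r | 3 : g3.

Definition tail_flags (n : NF) : list bool :=
  [f7 n; f8 n; f9 n; f10 n; f11 n; f12 n; f13 n; f14 n; f15 n; f16 n; f17 n].

Definition with_tail (n : NF) (fs : list bool) : NF :=
  match fs with
  | [g7; g8; g9; g10; g11; g12; g13; g14; g15; g16; g17] =>
      mkNF (e1 n) (e2 n) (e3 n) (e4 n) (e5 n) (e6 n)
        g7 g8 g9 g10 g11 g12 g13 g14 g15 g16 g17
  | _ => n
  end.

(* Right multiplication of a normal form by [a_k^e]: on its way left, [a_k^e]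
   crosses the tail (the [p_ij] with [k] not in [{i,j}] contributing [z]), each
   [b_j^(e_j)] (creating [p_kj], which on its way right crosses the later [b_l]
   and creates [t]), and the [a_l^(e_l)] with [l > k] (creating [u_kl]).  A
   factor [b_k^e] only crosses the tail ([p_ij] contributing [t]) and the later
   [b_l] (creating [v_kl]).  All created letters are involutions, so only
   parities of exponents matter. *)
Definition nf_mul_a1 (n : NF) (e : Z) : NF := let o := Z.odd e in
  mkNF (e1 n + e) (e2 n) (e3 n) (e4 n) (e5 n) (e6 n)
   (xorb (f7 n) (Z.odd (e2 n) && o)) (xorb (f8 n) (Z.odd (e3 n) && o)) (f9 n)
   (f10 n) (f11 n) (f12 n)
   (xorb (f13 n) (Z.odd (e5 n) && o)) (xorb (f14 n) (Z.odd (e6 n) && o)) (f15 n)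
   (xorb (f16 n) (o && f15 n)) (xorb (f17 n) (Z.odd (e5 n) && o && Z.odd (e6 n))).

Definition nf_mul_a2 (n : NF) (e : Z) : NF := let o := Z.odd e in
  mkNF (e1 n) (e2 n + e) (e3 n) (e4 n) (e5 n) (e6 n)
   (f7 n) (f8 n) (xorb (f9 n) (Z.odd (e3 n) && o))
   (f10 n) (f11 n) (f12 n)
   (xorb (f13 n) (Z.odd (e4 n) && o)) (f14 n) (xorb (f15 n) (Z.odd (e6 n) && o))
   (xorb (f16 n) (o && f14 n)) (xorb (f17 n) (Z.odd (e4 n) && o && Z.odd (e6 n))).

Definition nf_mul_a3 (n : NF) (e : Z) : NF := let o := Z.odd e in
  mkNF (e1 n) (e2 n) (e3 n + e) (e4 n) (e5 n) (e6 n)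
   (f7 n) (f8 n) (f9 n) (f10 n) (f11 n) (f12 n)
   (f13 n) (xorb (f14 n) (Z.odd (e4 n) && o)) (xorb (f15 n) (Z.odd (e5 n) && o))
   (xorb (f16 n) (o && f13 n)) (xorb (f17 n) (Z.odd (e4 n) && o && Z.odd (e5 n))).

Definition nf_mul_b1 (n : NF) (e : Z) : NF := let o := Z.odd e in
  mkNF (e1 n) (e2 n) (e3 n) (e4 n + e) (e5 n) (e6 n)
   (f7 n) (f8 n) (f9 n)
   (xorb (f10 n) (Z.odd (e5 n) && o)) (xorb (f11 n) (Z.odd (e6 n) && o)) (f12 n)
   (f13 n) (f14 n) (f15 n) (f16 n) (xorb (f17 n) (o && f15 n)).

Definition nf_mul_b2 (n : NF) (e : Z) : NF := let o := Z.odd e in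
  mkNF (e1 n) (e2 n) (e3 n) (e4 n) (e5 n + e) (e6 n)
   (f7 n) (f8 n) (f9 n) (f10 n) (f11 n) (xorb (f12 n) (Z.odd (e6 n) && o))
   (f13 n) (f14 n) (f15 n) (f16 n) (xorb (f17 n) (o && f14 n)).

Definition nf_mul_b3 (n : NF) (e : Z) : NF := let o := Z.odd e in
  mkNF (e1 n) (e2 n) (e3 n) (e4 n) (e5 n) (e6 n + e)
   (f7 n) (f8 n) (f9 n) (f10 n) (f11 n) (f12 n)
   (f13 n) (f14 n) (f15 n) (f16 n) (xorb (f17 n) (o && f13 n)).

Definition nf_mul (n m : NF) : NF :=
  let n1 := nf_mul_a3 (nf_mul_a2 (nf_mul_a1 n (e1 m)) (e2 m)) (e3 m) in
  let n2 := nf_mul_b3 (nf_mul_b2 (nf_mul_b1 n1 (e4 m)) (e5 m)) (e6 m) in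
  with_tail n2 (xorl (tail_flags n2) (tail_flags m)).

Section Collection.
Context {G : group} (a b : nat -> G).
Hypothesis Hrel : G3_relations a b.

Local Notation U := (uu G a).
Local Notation V := (vv G b).
Local Notation P := (pp G a b).
Local Notation z123 := (zz G a b 1 2 3).
Local Notation t123 := (tt G a b 1 2 3).

Definition tail_letters : list G :=
  [U 1 2; U 1 3; U 2 3; V 1 2; V 1 3; V 2 3; P 1 2; P 1 3; P 2 3; z123; t123].

Definition a_part (n : NF) : G := zpow (a 1) (e1 n) · zpow (a 2) (e2 n) · zpow (a 3) (e3 n).
Definition b_part (n : NF) : G := zpow (b 1) (e4 n) · zpow (b 2) (e5 n) · zpow (b 3) (e6 n).

Local Notation tail n := (prod_bpow tail_letters (tail_flags n)).

Lemma nfeval_split n : nfeval (basis a b) n = a_part n · b_part n · tail n.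
Proof.
  destruct n; unfold nfeval, a_part, b_part, tail_flags, tail_letters; simpl.
  rewrite mulg1, !gmulA. reflexivity.
Qed.

Lemma tail_letters_involutions : commuting_involutions tail_letters.
Proof.
  split.
  - intros x y Hx Hy. unfold tail_letters in Hx, Hy. simpl in Hx, Hy.
    repeat destruct Hx as [<-|Hx]; try contradiction;
    repeat destruct Hy as [<-|Hy]; try contradiction; eauto with g3.
  - intros x Hx. unfold tail_letters in Hx. simpl in Hx.
    repeat destruct Hx as [<-|Hx]; try contradiction; eauto with g3.
Qed.

Tactic Notation "shift_central" constr(l) :=
  match goal with
  | |- context [bpow l ?f] => repeat rewrite (central_shift (bpow l f)) by eauto with g3
  end.

Ltac simpl_comm :=
  repeat match goal with
  | |- context [comm ?l ?y] =>
      first [ rewrite (commute_comm1 l y) by eauto with g3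
            | rewrite (comm_pp_a _ _ Hrel _ _ _) by eauto with g3
            | rewrite (comm_pp_b _ _ Hrel _ _ _) by eauto with g3 ]
  end;
  rewrite ?bpow1, ?mulg1, ?gmul1l, ?bpow_andb.

Lemma zpow_aa i j f e : idx i -> idx j ->
  zpow (a i) f · zpow (a j) e = zpow (a j) e · zpow (a i) f · bpow (U j i) (Z.odd f && Z.odd e).
Proof.
  intros Hi Hj. rewrite (uu_sym a b Hrel j i) by auto.
  pose proof (uu_central a b Hrel i j Hi Hj) as Hc.
  apply zpow_commg; [apply Hc | apply Hc | apply (uu_invol a b Hrel); auto].
Qed.

Lemma zpow_bb i j f e : idx i -> idx j ->
  zpow (b i) f · zpow (b j) e = zpow (b j) e · zpow (b i) f · bpow (V j i) (Z.odd f && Z.odd e).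
Proof.
  intros Hi Hj. rewrite (vv_sym a b Hrel j i) by auto.
  pose proof (vv_central a b Hrel i j Hi Hj) as Hc.
  apply zpow_commg; [apply Hc | apply Hc | apply (vv_invol a b Hrel); auto].
Qed.

Lemma zpow_ba j k f e : idx j -> idx k ->
  zpow (b j) f · zpow (a k) e = zpow (a k) e · zpow (b j) f · bpow (P k j) (Z.odd f && Z.odd e).
Proof.
  intros Hj Hk. apply zpow_swap; eauto with g3.
  apply swap_rel_sym; [apply commgC | eauto with g3].
Qed.

Lemma bpow_pp_zpow_b i j k x e : idx i -> idx j -> idx k ->
  bpow (P i j) x · zpow (b k) e
  = zpow (b k) e · bpow (P i j) x · bpow (comm (P i j) (b k)) (x && Z.odd e).
Proof.
  intros Hi Hj Hk. rewrite bpow_zpow.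
  replace x with (Z.odd (Z.b2z x)) at 3 by (destruct x; reflexivity).
  destruct (comm_pp_b_cases a b Hrel i j k Hi Hj Hk) as [E | E];
    apply zpow_commg; rewrite E; eauto with g3.
Qed.

Lemma a_part_mul_a1 n e : a_part n · zpow (a 1) e =
  zpow (a 1) (e1 n + e) · zpow (a 2) (e2 n) · zpow (a 3) (e3 n)
  · bpow (U 1 2) (Z.odd (e2 n) && Z.odd e) · bpow (U 1 3) (Z.odd (e3 n) && Z.odd e).
Proof.
  unfold a_part.
  rewrite_suffix (zpow_aa 3 1 (e3 n) e idx3 idx1).
  rewrite_suffix (zpow_aa 2 1 (e2 n) e idx2 idx1).
  shift_central (U 1 2).
  rewrite <- zpowD. reflexivity.
Qed.

Lemma a_part_mul_a2 n e : a_part n · zpow (a 2) e =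
  zpow (a 1) (e1 n) · zpow (a 2) (e2 n + e) · zpow (a 3) (e3 n)
  · bpow (U 2 3) (Z.odd (e3 n) && Z.odd e).
Proof.
  unfold a_part.
  rewrite_suffix (zpow_aa 3 2 (e3 n) e idx3 idx2).
  rewrite <- (gmulA _ (zpow (a 2) (e2 n))), <- zpowD. reflexivity.
Qed.

Lemma a_part_mul_a3 n e : a_part n · zpow (a 3) e =
  zpow (a 1) (e1 n) · zpow (a 2) (e2 n) · zpow (a 3) (e3 n + e).
Proof. unfold a_part. rewrite <- gmulA, <- zpowD. reflexivity. Qed.

Lemma b_part_mul_b1 n e : b_part n · zpow (b 1) e =
  zpow (b 1) (e4 n + e) · zpow (b 2) (e5 n) · zpow (b 3) (e6 n)
  · bpow (V 1 2) (Z.odd (e5 n) && Z.odd e) · bpow (V 1 3) (Z.odd (e6 n) && Z.odd e).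
Proof.
  unfold b_part.
  rewrite_suffix (zpow_bb 3 1 (e6 n) e idx3 idx1).
  rewrite_suffix (zpow_bb 2 1 (e5 n) e idx2 idx1).
  shift_central (V 1 2).
  rewrite <- zpowD. reflexivity.
Qed.

Lemma b_part_mul_b2 n e : b_part n · zpow (b 2) e =
  zpow (b 1) (e4 n) · zpow (b 2) (e5 n + e) · zpow (b 3) (e6 n)
  · bpow (V 2 3) (Z.odd (e6 n) && Z.odd e).
Proof.
  unfold b_part.
  rewrite_suffix (zpow_bb 3 2 (e6 n) e idx3 idx2).
  rewrite <- (gmulA _ (zpow (b 2) (e5 n))), <- zpowD. reflexivity.
Qed.

Lemma b_part_mul_b3 n e : b_part n · zpow (b 3) e =
  zpow (b 1) (e4 n) · zpow (b 2) (e5 n) · zpow (b 3) (e6 n + e).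
Proof. unfold b_part. rewrite <- gmulA, <- zpowD. reflexivity. Qed.

Lemma b_part_swap_a1 n e : b_part n · zpow (a 1) e = zpow (a 1) e · b_part n
  · bpow (P 1 2) (Z.odd (e5 n) && Z.odd e) · bpow (P 1 3) (Z.odd (e6 n) && Z.odd e)
  · bpow t123 (Z.odd (e5 n) && Z.odd e && Z.odd (e6 n)).
Proof.
  unfold b_part. rewrite <- (gmul1l (zpow (b 1) (e4 n))) at 1. rewrite !gmulA.
  rewrite_suffix (zpow_ba 3 1 (e6 n) e idx3 idx1).
  rewrite_suffix (zpow_ba 2 1 (e5 n) e idx2 idx1).
  rewrite_suffix (commute_zpow2 _ _ (e4 n) e (commute_sym _ _ (commute_ab a b Hrel 1 idx1))).
  rewrite_suffix (bpow_pp_zpow_b 1 2 3 (Z.odd (e5 n) && Z.odd e) (e6 n) idx1 idx2 idx3).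
  simpl_comm. shift_central t123. reflexivity.
Qed.

Lemma b_part_swap_a2 n e : b_part n · zpow (a 2) e = zpow (a 2) e · b_part n
  · bpow (P 1 2) (Z.odd (e4 n) && Z.odd e) · bpow (P 2 3) (Z.odd (e6 n) && Z.odd e)
  · bpow t123 (Z.odd (e4 n) && Z.odd e && Z.odd (e6 n)).
Proof.
  unfold b_part. rewrite <- (gmul1l (zpow (b 1) (e4 n))) at 1. rewrite !gmulA.
  rewrite_suffix (zpow_ba 3 2 (e6 n) e idx3 idx2).
  rewrite_suffix (commute_zpow2 _ _ (e5 n) e (commute_sym _ _ (commute_ab a b Hrel 2 idx2))).
  rewrite_suffix (zpow_ba 1 2 (e4 n) e idx1 idx2).
  rewrite_suffix (bpow_pp_zpow_b 2 1 2 (Z.odd (e4 n) && Z.odd e) (e5 n) idx2 idx1 idx2).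
  simpl_comm.
  rewrite_suffix (bpow_pp_zpow_b 2 1 3 (Z.odd (e4 n) && Z.odd e) (e6 n) idx2 idx1 idx3).
  simpl_comm. shift_central t123. rewrite (pp_sym a b Hrel 2 1 idx2 idx1). reflexivity.
Qed.

Lemma b_part_swap_a3 n e : b_part n · zpow (a 3) e = zpow (a 3) e · b_part n
  · bpow (P 1 3) (Z.odd (e4 n) && Z.odd e) · bpow (P 2 3) (Z.odd (e5 n) && Z.odd e)
  · bpow t123 (Z.odd (e4 n) && Z.odd e && Z.odd (e5 n)).
Proof.
  unfold b_part. rewrite <- (gmul1l (zpow (b 1) (e4 n))) at 1. rewrite !gmulA.
  rewrite_suffix (commute_zpow2 _ _ (e6 n) e (commute_sym _ _ (commute_ab a b Hrel 3 idx3))).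
  rewrite_suffix (zpow_ba 2 3 (e5 n) e idx2 idx3).
  rewrite_suffix (zpow_ba 1 3 (e4 n) e idx1 idx3).
  rewrite_suffix (bpow_pp_zpow_b 3 1 2 (Z.odd (e4 n) && Z.odd e) (e5 n) idx3 idx1 idx2).
  simpl_comm. shift_central t123.
  rewrite_suffix (bpow_pp_zpow_b 3 2 3 (Z.odd (e5 n) && Z.odd e) (e6 n) idx3 idx2 idx3).
  rewrite_suffix (bpow_pp_zpow_b 3 1 3 (Z.odd (e4 n) && Z.odd e) (e6 n) idx3 idx1 idx3).
  simpl_comm. shift_central t123.
  rewrite (pp_sym a b Hrel 3 1 idx3 idx1), (pp_sym a b Hrel 3 2 idx3 idx2). reflexivity.
Qed.

Lemma tail_pass_a k n e : idx k ->
  tail n · zpow (a k) e = zpow (a k) e · tail n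
  · prod_bpow (map (fun l => bpow (comm l (a k)) (Z.odd e)) tail_letters) (tail_flags n).
Proof.
  intro Hk. apply prod_bpow_pass_zpow. intros l Hl.
  unfold tail_letters in Hl. simpl in Hl.
  repeat destruct Hl as [<-|Hl]; try contradiction;
  first
    [ rewrite commute_comm1 by eauto with g3; eauto with g3
    | match goal with |- context [comm (pp _ _ _ ?i ?j) _] =>
        destruct (comm_pp_a_cases a b Hrel i j k) as [-> | ->]; eauto with g3
      end ].
Qed.

Lemma tail_pass_b k n e : idx k ->
  tail n · zpow (b k) e = zpow (b k) e · tail n
  · prod_bpow (map (fun l => bpow (comm l (b k)) (Z.odd e)) tail_letters) (tail_flags n).
Proof.
  intro Hk. apply prod_bpow_pass_zpow. intros l Hl.
  unfold tail_letters in Hl. simpl in Hl.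
  repeat destruct Hl as [<-|Hl]; try contradiction;
  first
    [ rewrite commute_comm1 by eauto with g3; eauto with g3
    | match goal with |- context [comm (pp _ _ _ ?i ?j) _] =>
        destruct (comm_pp_b_cases a b Hrel i j k) as [-> | ->]; eauto with g3
      end ].
Qed.

Lemma tail_merge w fs gs : length fs = 11 -> length gs = 11 ->
  w · prod_bpow tail_letters fs · prod_bpow tail_letters gs
  = w · prod_bpow tail_letters (xorl fs gs).
Proof.
  intros Hf Hg. rewrite <- gmulA, prod_bpow_xorl; auto using tail_letters_involutions.
Qed.

Ltac letter_index l ls :=
  lazymatch ls with
  | l :: _ => constr:(0)
  | _ :: ?ls' => let k := letter_index l ls' in constr:(S k)
  end.

Ltac collect_tail :=
  repeat match goal with
  | |- context [bpow ?l ?x] =>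
      let ls := eval unfold tail_letters in tail_letters in
      let k := letter_index l ls in
      let E := fresh in
      assert (E : bpow l x = prod_bpow tail_letters
                    (repeat false k ++ x :: repeat false (length tail_letters - S k)))
        by (apply (bpow_nth_prod tail_letters k x); simpl; lia);
      rewrite E; clear E
  end;
  repeat (rewrite tail_merge by reflexivity).

Ltac simpl_costs :=
  let tn := fresh "tn" in
  match goal with
  | |- context [prod_bpow tail_letters ?fs] => set (tn := prod_bpow tail_letters fs)
  end;
  unfold tail_letters; cbn [map prod_bpow tail_flags]; simpl_comm; subst tn.

Ltac finish_nf mul :=
  rewrite nfeval_split; unfold a_part, b_part, tail_flags, mul;
  cbn [e1 e2 e3 e4 e5 e6 f7 f8 f9 f10 f11 f12 f13 f14 f15 f16 f17]; rewrite ?gmulA;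
  f_equal; apply (f_equal (prod_bpow tail_letters)); simpl;
  repeat (apply (f_equal2 cons); [btauto|]); reflexivity.

Lemma nfeval_mul_a1 n e : nfeval (basis a b) n · zpow (a 1) e = nfeval (basis a b) (nf_mul_a1 n e).
Proof.
  rewrite nfeval_split.
  rewrite_suffix (tail_pass_a 1 n e idx1). simpl_costs.
  rewrite_suffix (b_part_swap_a1 n e).
  rewrite a_part_mul_a1. shift_central (U 1 3). shift_central (U 1 2).
  collect_tail. finish_nf nf_mul_a1.
Qed.

Lemma nfeval_mul_a2 n e : nfeval (basis a b) n · zpow (a 2) e = nfeval (basis a b) (nf_mul_a2 n e).
Proof.
  rewrite nfeval_split.
  rewrite_suffix (tail_pass_a 2 n e idx2). simpl_costs.
  rewrite_suffix (b_part_swap_a2 n e).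
  rewrite a_part_mul_a2. shift_central (U 2 3).
  collect_tail. finish_nf nf_mul_a2.
Qed.

Lemma nfeval_mul_a3 n e : nfeval (basis a b) n · zpow (a 3) e = nfeval (basis a b) (nf_mul_a3 n e).
Proof.
  rewrite nfeval_split.
  rewrite_suffix (tail_pass_a 3 n e idx3). simpl_costs.
  rewrite_suffix (b_part_swap_a3 n e).
  rewrite a_part_mul_a3.
  collect_tail. finish_nf nf_mul_a3.
Qed.

Lemma nfeval_mul_b1 n e : nfeval (basis a b) n · zpow (b 1) e = nfeval (basis a b) (nf_mul_b1 n e).
Proof.
  rewrite nfeval_split.
  rewrite_suffix (tail_pass_b 1 n e idx1). simpl_costs.
  rewrite_suffix (b_part_mul_b1 n e).
  collect_tail. finish_nf nf_mul_b1.
Qed.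

Lemma nfeval_mul_b2 n e : nfeval (basis a b) n · zpow (b 2) e = nfeval (basis a b) (nf_mul_b2 n e).
Proof.
  rewrite nfeval_split.
  rewrite_suffix (tail_pass_b 2 n e idx2). simpl_costs.
  rewrite_suffix (b_part_mul_b2 n e).
  collect_tail. finish_nf nf_mul_b2.
Qed.

Lemma nfeval_mul_b3 n e : nfeval (basis a b) n · zpow (b 3) e = nfeval (basis a b) (nf_mul_b3 n e).
Proof.
  rewrite nfeval_split.
  rewrite_suffix (tail_pass_b 3 n e idx3). simpl_costs.
  rewrite_suffix (b_part_mul_b3 n e).
  collect_tail. finish_nf nf_mul_b3.
Qed.

Lemma nfeval_mul_tail n gs : length gs = 11 ->
  nfeval (basis a b) n · prod_bpow tail_letters gs
  = nfeval (basis a b) (with_tail n (xorl (tail_flags n) gs)).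
Proof.
  intro Hl. do 11 (destruct gs as [|? gs]; [discriminate|]). destruct gs; [|discriminate].
  rewrite !nfeval_split, tail_merge by reflexivity. reflexivity.
Qed.

Theorem nfeval_mul n m :
  nfeval (basis a b) n · nfeval (basis a b) m = nfeval (basis a b) (nf_mul n m).
Proof.
  rewrite (nfeval_split m). unfold a_part, b_part. rewrite !gmulA.
  rewrite nfeval_mul_a1, nfeval_mul_a2, nfeval_mul_a3, nfeval_mul_b1, nfeval_mul_b2,
    nfeval_mul_b3, nfeval_mul_tail by reflexivity.
  reflexivity.
Qed.

End Collection.

Definition nf_one : NF :=
  mkNF 0 0 0 0 0 0 false false false false false false false false false false false.

Definition nf_letter (k : nat) (z : Z) : NF :=
  match k with
  | 1 => mkNF z 0 0 0 0 0 false false false false false false false false false false false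
  | 2 => mkNF 0 z 0 0 0 0 false false false false false false false false false false false
  | 3 => mkNF 0 0 z 0 0 0 false false false false false false false false false false false
  | 4 => mkNF 0 0 0 z 0 0 false false false false false false false false false false false
  | 5 => mkNF 0 0 0 0 z 0 false false false false false false false false false false false
  | 6 => mkNF 0 0 0 0 0 z false false false false false false false false false false false
  | _ => nf_one
  end.

Lemma nfeval_one {G : group} (c : nat -> G) : nfeval c nf_one = gone.
Proof. unfold nfeval. simpl. rewrite !gmul1l. reflexivity. Qed.

Lemma nfeval_letter {G : group} (c : nat -> G) k z : 1 <= k <= 6 ->
  nfeval c (nf_letter k z) = zpow (c k) z.
Proof.
  intro Hk.
  do 7 (destruct k as [|k]; [try lia; unfold nfeval; simpl; rewrite ?gmul1l, ?mulg1; reflexivity|]).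
  lia.
Qed.

Section NormalFormIdentities.
Context {G : group} (a b : nat -> G).

Lemma a_nf i : idx i -> a i = nfeval (basis a b) (nf_letter i 1).
Proof.
  intro Hi. rewrite nfeval_letter by (unfold idx in Hi; lia).
  destruct (idx_cases i Hi) as [ -> | [ -> | -> ] ]; symmetry; apply zpow1.
Qed.

Lemma a_inv_nf i : idx i -> ginv (a i) = nfeval (basis a b) (nf_letter i (-1)).
Proof.
  intro Hi. rewrite nfeval_letter by (unfold idx in Hi; lia).
  destruct (idx_cases i Hi) as [ -> | [ -> | -> ] ]; symmetry; apply zpowN1.
Qed.

Lemma b_nf i : idx i -> b i = nfeval (basis a b) (nf_letter (3 + i) 1).
Proof.
  intro Hi. rewrite nfeval_letter by (unfold idx in Hi; lia).
  destruct (idx_cases i Hi) as [ -> | [ -> | -> ] ]; symmetry; apply zpow1.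
Qed.

Lemma b_inv_nf i : idx i -> ginv (b i) = nfeval (basis a b) (nf_letter (3 + i) (-1)).
Proof.
  intro Hi. rewrite nfeval_letter by (unfold idx in Hi; lia).
  destruct (idx_cases i Hi) as [ -> | [ -> | -> ] ]; symmetry; apply zpowN1.
Qed.

End NormalFormIdentities.

Ltac nf_normalize Hrel :=
  lazymatch type of Hrel with
  | G3_relations ?a ?b =>
    unfold zz, tt, uu, vv, pp, comm; rewrite ?npow2, ?invMg, ?invgK;
    repeat match goal with
      | |- context [ginv (a ?i)] => rewrite (a_inv_nf a b i) by (unfold idx; lia)
      | |- context [ginv (b ?i)] => rewrite (b_inv_nf a b i) by (unfold idx; lia)
      end;
    repeat match goal with
      | |- context [a ?i] => rewrite (a_nf a b i) by (unfold idx; lia)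
      | |- context [b ?i] => rewrite (b_nf a b i) by (unfold idx; lia)
      end;
    rewrite <- ?(nfeval_one (basis a b));
    repeat rewrite (nfeval_mul a b Hrel)
  end.

Ltac nf_identity Hrel := nf_normalize Hrel; apply f_equal; vm_compute; reflexivity.

Definition tau_gen_b {G : group} (a b : nat -> G) (i : nat) : G := ginv (a i) · ginv (b i).

Section Images.
Context {G : group} (a b : nat -> G).
Hypothesis Hrel : G3_relations a b.

Local Notation U := (uu G a).
Local Notation V := (vv G b).
Local Notation z123 := (zz G a b 1 2 3).
Local Notation t123 := (tt G a b 1 2 3).

Ltac pair_cases Hi Hj :=
  destruct (idx_cases _ Hi) as [ -> | [ -> | -> ] ];
  destruct (idx_cases _ Hj) as [ -> | [ -> | -> ] ]; try lia.

Ltac triple_cases Hi Hj Hk :=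
  destruct (idx_cases _ Hi) as [ -> | [ -> | -> ] ];
  destruct (idx_cases _ Hj) as [ -> | [ -> | -> ] ];
  destruct (idx_cases _ Hk) as [ -> | [ -> | -> ] ]; try lia.

Lemma G3_relations_tau : G3_relations a (tau_gen_b a b).
Proof.
  split; [|split].
  - intros i Hi. split; [|split]; [| apply (central_sq_a a b Hrel); auto |].
    + unfold tau_gen_b. destruct (idx_cases i Hi) as [ -> | [ -> | -> ] ]; nf_identity Hrel.
    + replace (npow (tau_gen_b a b i) 2) with (ginv (npow (a i) 2) · ginv (npow (b i) 2)).
      * apply centralM; apply centralV;
          [apply (central_sq_a a b Hrel) | apply (central_sq_b a b Hrel)]; auto.
      * unfold tau_gen_b. destruct (idx_cases i Hi) as [ -> | [ -> | -> ] ]; nf_identity Hrel.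
  - intros i j Hi Hj Hij.
    assert (HV : vv G (tau_gen_b a b) i j = U i j · V i j).
    { unfold tau_gen_b. pair_cases Hi Hj; nf_identity Hrel. }
    split; [|split; [|split; [|split; [|split; [|split; [|split]]]]]].
    5: apply (uu_central a b Hrel); auto.
    5: rewrite HV; apply centralM; eauto with g3.
    all: unfold tau_gen_b; pair_cases Hi Hj; nf_identity Hrel.
  - intros i j k Hi Hj Hk Hij Hjk Hik.
    assert (HZ : zz G a (tau_gen_b a b) i j k = z123).
    { unfold tau_gen_b. triple_cases Hi Hj Hk; nf_identity Hrel. }
    assert (HT : tt G a (tau_gen_b a b) i j k = z123 · t123).
    { unfold tau_gen_b. triple_cases Hi Hj Hk; nf_identity Hrel. }
    split; [|split; [|split; [|split; [|split; [|split; [|split]]]]]].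
    7: rewrite HZ; eauto with g3.
    7: rewrite HT; apply centralM; eauto with g3.
    all: unfold tau_gen_b; triple_cases Hi Hj Hk; nf_identity Hrel.
Qed.

Lemma basis_tau k : 1 <= k <= 17 -> basis a (tau_gen_b a b) k = tau_img a b k.
Proof.
  intro Hk.
  do 18 (destruct k as [|k];
    [try lia; cbn [basis tau_img]; try reflexivity; unfold tau_gen_b; nf_identity Hrel|]).
  lia.
Qed.

Lemma G3_relations_swap : G3_relations b a.
Proof.
  split; [|split].
  - intros i Hi. split; [|split]; [| apply (central_sq_b a b Hrel); auto
                                    | apply (central_sq_a a b Hrel); auto].
    destruct (idx_cases i Hi) as [ -> | [ -> | -> ] ]; nf_identity Hrel.
  - intros i j Hi Hj Hij.
    split; [|split; [|split; [|split; [|split; [|split; [|split]]]]]].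
    5: apply (vv_central a b Hrel); auto.
    5: apply (uu_central a b Hrel); auto.
    all: pair_cases Hi Hj; nf_identity Hrel.
  - intros i j k Hi Hj Hk Hij Hjk Hik.
    assert (HZ : zz G b a i j k = t123) by (triple_cases Hi Hj Hk; nf_identity Hrel).
    assert (HT : tt G b a i j k = z123) by (triple_cases Hi Hj Hk; nf_identity Hrel).
    split; [|split; [|split; [|split; [|split; [|split; [|split]]]]]].
    7: rewrite HZ; eauto with g3.
    7: rewrite HT; eauto with g3.
    all: triple_cases Hi Hj Hk; nf_identity Hrel.
Qed.

Lemma basis_swap k : 1 <= k <= 17 -> basis b a k = sigma_img a b k.
Proof.
  intro Hk.
  do 18 (destruct k as [|k];
    [try lia; cbn [basis sigma_img]; try reflexivity; nf_identity Hrel|]).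
  lia.
Qed.

End Images.

Section Homomorphisms.
Context {G : group} (f : G -> G).
Hypothesis Hf : is_hom f.

Lemma hom1 : f gone = gone.
Proof. apply (mulgI (f gone)). rewrite <- Hf, gmul1l, mulg1. reflexivity. Qed.

Lemma homV x : f (ginv x) = ginv (f x).
Proof. symmetry. apply invg_of_mul1. rewrite <- Hf, mulgV. apply hom1. Qed.

Lemma hom_npow x n : f (npow x n) = npow (f x) n.
Proof. induction n; simpl; [apply hom1 | rewrite Hf, IHn; reflexivity]. Qed.

Lemma hom_zpow x e : f (zpow x e) = zpow (f x) e.
Proof. destruct e; simpl; rewrite ?homV, ?hom_npow; auto using hom1. Qed.

Lemma hom_bpow x c : f (bpow x c) = bpow (f x) c.
Proof. destruct c; simpl; auto using hom1. Qed.

Lemma hom_comm x y : f (comm x y) = comm (f x) (f y).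
Proof. unfold comm. rewrite !Hf, !homV. reflexivity. Qed.

Lemma hom_nfeval c n : f (nfeval c n) = nfeval (fun k => f (c k)) n.
Proof. unfold nfeval. rewrite !Hf, !hom_zpow, !hom_bpow. reflexivity. Qed.

End Homomorphisms.

Lemma is_hom_comp {G : group} (f g : G -> G) : is_hom f -> is_hom g -> is_hom (fun x => f (g x)).
Proof. intros Hf Hg x y. rewrite Hg, Hf. reflexivity. Qed.

Lemma is_automorphism_of_iter {G : group} (f : G -> G) n :
  is_hom f -> (forall x, Nat.iter (S n) f x = x) -> is_automorphism f.
Proof.
  intros Hf Hn. split; [exact Hf |]. exists (Nat.iter n f). split; intro x.
  - rewrite <- Nat.iter_succ_r. apply Hn.
  - rewrite <- Nat.iter_succ. apply Hn.
Qed.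

Lemma nfeval_ext {G : group} (c c' : nat -> G) n :
  (forall k, 1 <= k <= 17 -> c k = c' k) -> nfeval c n = nfeval c' n.
Proof. intro Hc. unfold nfeval. rewrite !Hc by lia. reflexivity. Qed.

Section NormalFormMaps.
Context {G : group} (a b : nat -> G).
Hypothesis Hrel : G3_relations a b.
Hypothesis Hnf : G3_unique_normal_form a b.

Lemma nfeval_inj n m : nfeval (basis a b) n = nfeval (basis a b) m -> n = m.
Proof.
  intro E. destruct (Hnf (nfeval (basis a b) n)) as [n' [_ Hu]].
  rewrite <- (Hu n eq_refl). apply Hu. symmetry. exact E.
Qed.

Lemma nfeval_neq n m : n <> m -> nfeval (basis a b) n <> nfeval (basis a b) m.
Proof. intros Hnm E. apply Hnm, nfeval_inj, E. Qed.

Lemma is_hom_of_nf (a' b' : nat -> G) (f : G -> G) : G3_relations a' b' ->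
  (forall n, f (nfeval (basis a b) n) = nfeval (basis a' b') n) -> is_hom f.
Proof.
  intros Hrel' Hf x y.
  destruct (Hnf x) as [n [<- _]]. destruct (Hnf y) as [m [<- _]].
  rewrite (nfeval_mul a b Hrel), !Hf, (nfeval_mul a' b' Hrel'). reflexivity.
Qed.

Lemma hom_id_of_fixed_generators (f : G -> G) : is_hom f ->
  (forall i, idx i -> f (a i) = a i) -> (forall i, idx i -> f (b i) = b i) ->
  forall x, f x = x.
Proof.
  intros Hf Ha Hb x. destruct (Hnf x) as [n [<- _]].
  rewrite (hom_nfeval f Hf). apply nfeval_ext. intros k Hk.
  do 18 (destruct k as [|k];
    [try lia; cbn [basis]; unfold zz, tt, uu, vv, pp;
     rewrite ?(hom_comm f Hf), ?Ha, ?Hb by (unfold idx; lia); reflexivity|]).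
  lia.
Qed.

Lemma nf_map_on_a (f : G -> G) (c : nat -> G) i :
  (forall n, f (nfeval (basis a b) n) = nfeval c n) -> idx i -> f (a i) = c i.
Proof.
  intros Hf Hi. rewrite (a_nf a b i Hi), Hf, nfeval_letter by (unfold idx in Hi; lia).
  apply zpow1.
Qed.

Lemma nf_map_on_b (f : G -> G) (c : nat -> G) i :
  (forall n, f (nfeval (basis a b) n) = nfeval c n) -> idx i -> f (b i) = c (3 + i).
Proof.
  intros Hf Hi. rewrite (b_nf a b i Hi), Hf, nfeval_letter by (unfold idx in Hi; lia).
  apply zpow1.
Qed.

End NormalFormMaps.

Section Automorphisms.
Context {G : group} (a b : nat -> G).
Hypothesis Hrel : G3_relations a b.
Hypothesis Hnf : G3_unique_normal_form a b.
Variables sigma tau : G -> G.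
Hypothesis Hsigma : forall n, sigma (nfeval (basis a b) n) = nfeval (sigma_img a b) n.
Hypothesis Htau : forall n, tau (nfeval (basis a b) n) = nfeval (tau_img a b) n.

Lemma tau_hom : is_hom tau.
Proof.
  apply (is_hom_of_nf a b Hrel Hnf a (tau_gen_b a b)); [apply G3_relations_tau, Hrel |].
  intro n. rewrite Htau. apply nfeval_ext. intros k Hk. symmetry. apply basis_tau; auto.
Qed.

Lemma sigma_hom : is_hom sigma.
Proof.
  apply (is_hom_of_nf a b Hrel Hnf b a); [apply G3_relations_swap, Hrel |].
  intro n. rewrite Hsigma. apply nfeval_ext. intros k Hk. symmetry. apply basis_swap; auto.
Qed.

Lemma tau_on_a i : idx i -> tau (a i) = a i.
Proof.
  intro Hi. rewrite (nf_map_on_a a b tau _ i Htau Hi).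
  destruct (idx_cases i Hi) as [ -> | [ -> | -> ] ]; reflexivity.
Qed.

Lemma tau_on_b i : idx i -> tau (b i) = ginv (a i) · ginv (b i).
Proof.
  intro Hi. rewrite (nf_map_on_b a b tau _ i Htau Hi).
  destruct (idx_cases i Hi) as [ -> | [ -> | -> ] ]; reflexivity.
Qed.

Lemma sigma_on_a i : idx i -> sigma (a i) = b i.
Proof.
  intro Hi. rewrite (nf_map_on_a a b sigma _ i Hsigma Hi).
  destruct (idx_cases i Hi) as [ -> | [ -> | -> ] ]; reflexivity.
Qed.

Lemma sigma_on_b i : idx i -> sigma (b i) = a i.
Proof.
  intro Hi. rewrite (nf_map_on_b a b sigma _ i Hsigma Hi).
  destruct (idx_cases i Hi) as [ -> | [ -> | -> ] ]; reflexivity.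
Qed.

Lemma rho_hom : is_hom (fun x => sigma (tau x)).
Proof. apply is_hom_comp; [apply sigma_hom | apply tau_hom]. Qed.

Lemma rho_on_a i : idx i -> sigma (tau (a i)) = b i.
Proof. intro Hi. rewrite tau_on_a, sigma_on_a; auto. Qed.

Lemma rho_on_b i : idx i -> sigma (tau (b i)) = ginv (b i) · ginv (a i).
Proof.
  intro Hi. rewrite tau_on_b, sigma_hom, !(homV sigma sigma_hom), sigma_on_a, sigma_on_b; auto.
Qed.

Lemma rho_inv_mul x y :
  sigma (tau (ginv x · ginv y)) = ginv (sigma (tau x)) · ginv (sigma (tau y)).
Proof. rewrite tau_hom, sigma_hom, !(homV tau tau_hom), !(homV sigma sigma_hom). reflexivity. Qed.

Lemma tau_involutive x : tau (tau x) = x.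
Proof.
  revert x. apply (hom_id_of_fixed_generators a b Hnf).
  { exact (is_hom_comp _ _ tau_hom tau_hom). }
  - intros i Hi. rewrite !tau_on_a; auto.
  - intros i Hi. rewrite tau_on_b, tau_hom, !(homV tau tau_hom), tau_on_a, tau_on_b by auto.
    rewrite invMg, !invgK, <- (commute_ab a b Hrel i Hi). apply mulKg.
Qed.

Lemma rho_cube x : sigma (tau (sigma (tau (sigma (tau x))))) = x.
Proof.
  revert x. apply (hom_id_of_fixed_generators a b Hnf).
  { exact (is_hom_comp _ _ rho_hom (is_hom_comp _ _ rho_hom rho_hom)). }
  - intros i Hi. rewrite rho_on_a, rho_on_b, rho_inv_mul, rho_on_a, rho_on_b by auto.
    rewrite invMg, !invgK. apply mulgK.
  - intros i Hi. rewrite rho_on_b, rho_inv_mul, rho_on_a, rho_on_b by auto.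
    rewrite invMg, !invgK, mulgK. apply rho_on_a; auto.
Qed.

Lemma tau_moves_b1 : tau (b 1) <> b 1.
Proof.
  rewrite tau_on_b by apply idx1. nf_normalize Hrel.
  apply (nfeval_neq a b Hnf). vm_compute. discriminate.
Qed.

Lemma rho_moves_a1 : sigma (tau (a 1)) <> a 1.
Proof.
  rewrite rho_on_a by apply idx1. nf_normalize Hrel.
  apply (nfeval_neq a b Hnf). vm_compute. discriminate.
Qed.

Lemma rho2_moves_a1 : sigma (tau (sigma (tau (a 1)))) <> a 1.
Proof.
  rewrite rho_on_a, rho_on_b by apply idx1. nf_normalize Hrel.
  apply (nfeval_neq a b Hnf). vm_compute. discriminate.
Qed.

End Automorphisms.

Theorem proposition2p13 (G : group) (a b : nat -> G)
  (Hrel : G3_relations a b) (Hnf : G3_unique_normal_form a b)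
  (sigma tau : G -> G)
  (Hsigma : forall n : NF, sigma (nfeval (basis a b) n) = nfeval (sigma_img a b) n)
  (Htau : forall n : NF, tau (nfeval (basis a b) n) = nfeval (tau_img a b) n) :
  is_automorphism tau /\ has_order tau 2 /\
  is_automorphism (fun g => sigma (tau g)) /\ has_order (fun g => sigma (tau g)) 3.
Proof.
  assert (Htau2 : forall x, tau (tau x) = x) by (apply (tau_involutive a b); assumption).
  assert (Hrho3 : forall x, sigma (tau (sigma (tau (sigma (tau x))))) = x)
    by (apply (rho_cube a b); assumption).
  split; [|split; [|split]].
  - apply (is_automorphism_of_iter tau 1); [apply (tau_hom a b) |]; assumption.
  - split; [lia | split; [exact Htau2 |]].
    intros m Hm. replace m with 1 by lia. exists (b 1).
    apply (tau_moves_b1 a b); assumption.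
  - apply (is_automorphism_of_iter _ 2); [apply (rho_hom a b) |]; assumption.
  - split; [lia | split; [exact Hrho3 |]].
    intros m Hm. exists (a 1). destruct m as [|[|[|m]]]; try lia.
    + apply (rho_moves_a1 a b); assumption.
    + apply (rho2_moves_a1 a b); assumption.
Qed.
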